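(* Assume $\cos(\varphi_{GU})>0$. Then $\mathcal{N}(\mathcal{G})=\mathcal{N}\big((\mathcal{U}^*\mathcal{U})^{\dagger/2}\mathcal{U}^*\mathcal{G}\big)$ and $$\sqrt{C}\cos(\varphi_{GU})\|c\|\le\|(\mathcal{U}^*\mathcal{U})^{\dagger/2}\mathcal{U}^*\mathcal{G}c\|\le\sqrt{D}\|c\|\quad\text{for all }c\in\mathcal{N}(\mathcal{G})^\perp.$$
   Context: $H$ is a separable Hilbert space. $\{u_j\}_{j\in\mathbb{N}}$ is a frame sequence with $U:=\overline{\operatorname{span}}\{u_j\}$ and bounds $A,B>0$ (i.e., $A\|f\|^2\le\sum_j|\langle f,u_j\rangle|^2\le B\|f\|^2$ for $f\in U$); $\{g_k\}_{k\in\mathbb{N}}$ is a frame sequence with $G:=\overline{\operatorname{span}}\{g_k\}$ and frame bounds $C,D>0$. $\mathcal{U},\mathcal{G}:\ell^2(\mathbb{N})\to H$ are the synthesis operators ($\mathcal{U}c=\sum c_ju_j$), $\mathcal{U}^*$ the analysis operator. $(\mathcal{U}^*\mathcal{U})^{\dagger/2}$ is the positive square root of the Moore–Penrose pseudoinverse of $\mathcal{U}^*\mathcal{U}$. $\cos(\varphi_{GU}):=\inf_{g\in G,\|g\|=1}\|P_Ug\|$, $P_U$ the orthogonal projection onto $U$. *)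

From Stdlib Require Import Reals ClassicalEpsilon.
Open Scope R_scope.

Record Cx := mkC { re : R; im : R }.
Definition C0 : Cx := mkC 0 0.
Definition C1 : Cx := mkC 1 0.
Definition Cadd (a b : Cx) : Cx := mkC (re a + re b) (im a + im b).
Definition Cmul (a b : Cx) : Cx :=
  mkC (re a * re b - im a * im b) (re a * im b + im a * re b).
Definition Cconj (a : Cx) : Cx := mkC (re a) (- im a).
Definition Cmod2 (a : Cx) : R := re a * re a + im a * im a.

Record HSpace := {
  hcar :> Type;
  hz : hcar;
  hadd : hcar -> hcar -> hcar;
  hopp : hcar -> hcar;
  hscal : Cx -> hcar -> hcar;
  hinner : hcar -> hcar -> Cx;
  hadd_assoc : forall x y z, hadd x (hadd y z) = hadd (hadd x y) z;
  hadd_comm : forall x y, hadd x y = hadd y x;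
  hadd_0 : forall x, hadd x hz = x;
  hadd_opp : forall x, hadd x (hopp x) = hz;
  hscal_1 : forall x, hscal C1 x = x;
  hscal_assoc : forall a b x, hscal a (hscal b x) = hscal (Cmul a b) x;
  hscal_distr_v : forall a x y, hscal a (hadd x y) = hadd (hscal a x) (hscal a y);
  hscal_distr_s : forall a b x, hscal (Cadd a b) x = hadd (hscal a x) (hscal b x);
  inner_add_l : forall x y z, hinner (hadd x y) z = Cadd (hinner x z) (hinner y z);
  inner_scal_l : forall a x y, hinner (hscal a x) y = Cmul a (hinner x y);
  inner_conj : forall x y, hinner y x = Cconj (hinner x y);
  inner_pos : forall x, 0 <= re (hinner x x);
  inner_def : forall x, hinner x x = C0 -> x = hz
}.

Arguments hz {h}.
Arguments hadd {h}.
Arguments hopp {h}.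
Arguments hscal {h}.
Arguments hinner {h}.

Section HS.
Context {H : HSpace}.

Definition hsub (x y : H) : H := hadd x (hopp y).
Definition hnorm (x : H) : R := sqrt (re (hinner x x)).

Fixpoint hpsum (f : nat -> H) (n : nat) : H :=
  match n with O => hz | S m => hadd (hpsum f m) (f m) end.

Definition has_sum (f : nat -> H) (x : H) : Prop :=
  forall eps, 0 < eps -> exists N, forall n, (N <= n)%nat ->
    hnorm (hsub (hpsum f n) x) < eps.

Definition complete : Prop :=
  forall s : nat -> H,
    (forall eps, 0 < eps -> exists N, forall n m, (N <= n)%nat -> (N <= m)%nat ->
        hnorm (hsub (s n) (s m)) < eps) ->
    exists l, forall eps, 0 < eps -> exists N, forall n, (N <= n)%nat ->
        hnorm (hsub (s n) l) < eps.

Definition separable : Prop :=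
  exists d : nat -> H, forall x eps, 0 < eps -> exists n, hnorm (hsub x (d n)) < eps.

Definition in_span (u : nat -> H) (f : H) : Prop :=
  exists (n : nat) (a : nat -> Cx), f = hpsum (fun j => hscal (a j) (u j)) n.
Definition in_cspan (u : nat -> H) (f : H) : Prop :=
  forall eps, 0 < eps -> exists y, in_span u y /\ hnorm (hsub f y) < eps.

Definition frame_seq (u : nat -> H) (A B : R) : Prop :=
  0 < A /\ 0 < B /\
  forall f, in_cspan u f ->
    exists s, infinite_sum (fun j => Cmod2 (hinner f (u j))) s /\
              A * (hnorm f) ^ 2 <= s <= B * (hnorm f) ^ 2.

Definition is_orth_proj (u : nat -> H) (g p : H) : Prop :=
  in_cspan u p /\ forall y, in_cspan u y -> hinner (hsub g p) y = C0.

Definition is_glb (S : R -> Prop) (c : R) : Prop :=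
  (forall r, S r -> c <= r) /\ (forall c', (forall r, S r -> c' <= r) -> c' <= c).

(* c = cos(phi_{GU}) = inf_{g in G, ||g|| = 1} ||P_U g||, G = cspan g, U = cspan u *)
Definition cos_angle (g u : nat -> H) (c : R) : Prop :=
  is_glb (fun r => exists x p, in_cspan g x /\ hnorm x = 1 /\
                               is_orth_proj u x p /\ r = hnorm p) c.

Definition series_sum (a : nat -> R) : R :=
  epsilon (inhabits 0) (fun s => infinite_sum a s).

Definition is_l2 (c : nat -> Cx) : Prop :=
  exists s, infinite_sum (fun n => Cmod2 (c n)) s.
Definition l2norm (c : nat -> Cx) : R := sqrt (series_sum (fun n => Cmod2 (c n))).
Definition l2inner (c d : nat -> Cx) : Cx :=
  mkC (series_sum (fun n => re (Cmul (c n) (Cconj (d n)))))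
      (series_sum (fun n => im (Cmul (c n) (Cconj (d n))))).
Definition seq_eq (c d : nat -> Cx) : Prop := forall n, c n = d n.
Definition zero_seq : nat -> Cx := fun _ => C0.

Definition synth (u : nat -> H) (c : nat -> Cx) : H :=
  epsilon (inhabits hz) (fun x => has_sum (fun k => hscal (c k) (u k)) x).
Definition analysis (u : nat -> H) (f : H) : nat -> Cx := fun j => hinner f (u j).

Definition gram (u : nat -> H) : (nat -> Cx) -> (nat -> Cx) :=
  fun c => analysis u (synth u c).

End HS.

Definition l2op := (nat -> Cx) -> (nat -> Cx).

Definition is_bounded_op (M : l2op) : Prop :=
  (forall x, is_l2 x -> is_l2 (M x)) /\
  (forall a x y, is_l2 x -> is_l2 y ->
     seq_eq (M (fun n => Cadd (Cmul a (x n)) (y n)))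
            (fun n => Cadd (Cmul a (M x n)) (M y n))) /\
  (exists K, forall x, is_l2 x -> l2norm (M x) <= K * l2norm x).

Definition is_MP_pinv (M P : l2op) : Prop :=
  is_bounded_op P /\
  (forall x, is_l2 x -> seq_eq (M (P (M x))) (M x)) /\
  (forall x, is_l2 x -> seq_eq (P (M (P x))) (P x)) /\
  (forall x y, is_l2 x -> is_l2 y -> l2inner (M (P x)) y = l2inner x (M (P y))) /\
  (forall x y, is_l2 x -> is_l2 y -> l2inner (P (M x)) y = l2inner x (P (M y))).

Definition is_pos_sqrt (P S : l2op) : Prop :=
  is_bounded_op S /\
  (forall x y, is_l2 x -> is_l2 y -> l2inner (S x) y = l2inner x (S y)) /\
  (forall x, is_l2 x -> 0 <= re (l2inner (S x) x)) /\
  (forall x, is_l2 x -> seq_eq (S (S x)) (P x)).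

Definition is_sqrt_pinv (M S : l2op) : Prop :=
  exists P, is_MP_pinv M P /\ is_pos_sqrt P S.

From Pilot Require Import Defs.
From Stdlib Require Import Reals.
Open Scope R_scope.
From Stdlib Require Import Lra Lia Psatz ClassicalEpsilon FunctionalExtensionality.

(** Write [P_U] for the orthogonal projection onto [U] and [T] for [(U^*U)^(dagger/2)].
    The proof rests on two facts.

    - Projection formula: for every [f], [U P U^* f = P_U f] (with [P] the Moore-Penrose
      inverse of [U^*U]) and [|T U^* f| = |P_U f|].  Hence, for [f] in [G],
      [cos(phi_GU) |f| <= |T U^* f| <= |f|] by the definition of [cos(phi_GU)] and Bessel.
    - Lower synthesis bound: [sqrt C |c| <= |G c|] for [c] orthogonal to [N(G)].  It uses that
      the frame operator [S = G G^*] maps [G] onto [G], proved by a Richardson iteration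
      [w_(n+1) = w_n + (f - S w_n) / D], which contracts because of the frame bounds.

    Taking [f = G c] gives the kernel identity (using [cos(phi_GU) > 0]) and the two-sided
    estimate, with the upper bound [|G c| <= sqrt D |c|] from the Bessel inequality. *)

Fixpoint rsum (a : nat -> R) (n : nat) : R :=
  match n with O => 0 | S m => rsum a m + a m end.

Lemma sum_f_R0_rsum a n : sum_f_R0 a n = rsum a (S n).
Proof. induction n; simpl in *; [lra | rewrite IHn; simpl; lra]. Qed.

Lemma rsum_ext a b n : (forall k, a k = b k) -> rsum a n = rsum b n.
Proof. intros E; induction n; simpl; [auto | rewrite IHn, E; auto]. Qed.

Lemma rsum_plus a b n : rsum (fun k => a k + b k) n = rsum a n + rsum b n.
Proof. induction n; simpl; [ring | rewrite IHn; ring]. Qed.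

Lemma rsum_scal a k n : rsum (fun j => k * a j) n = k * rsum a n.
Proof. induction n; simpl; [ring | rewrite IHn; ring]. Qed.

Lemma rsum_zero n : rsum (fun _ => 0) n = 0.
Proof. induction n; simpl; [auto | rewrite IHn; ring]. Qed.

Lemma rsum_le a b n : (forall k, a k <= b k) -> rsum a n <= rsum b n.
Proof. intros H; induction n; simpl; [lra | specialize (H n); lra]. Qed.

Lemma rsum_nonneg a n : (forall k, 0 <= a k) -> 0 <= rsum a n.
Proof. intros H; induction n; simpl; [lra | specialize (H n); lra]. Qed.

Lemma rsum_mono a n m : (forall k, 0 <= a k) -> (n <= m)%nat -> rsum a n <= rsum a m.
Proof. intros H Hnm; induction Hnm; [lra | simpl; specialize (H m); lra]. Qed.

Lemma Un_cv_ext u v l : (forall n, u n = v n) -> Un_cv u l -> Un_cv v l.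
Proof.
  intros E H e He; destruct (H e He) as [N HN]; exists N; intros n Hn; rewrite <- E; auto.
Qed.

Lemma Un_cv_const c : Un_cv (fun _ => c) c.
Proof. intros e He; exists O; intros; unfold Rdist; rewrite Rminus_diag, Rabs_R0; lra. Qed.

Lemma Un_cv_scal u l k : Un_cv u l -> Un_cv (fun n => k * u n) (k * l).
Proof. intros H; apply (CV_mult (fun _ => k)); [apply Un_cv_const | exact H]. Qed.

Lemma Un_cv_le_const u l b : (forall n, u n <= b) -> Un_cv u l -> l <= b.
Proof. intros H Hu; apply (Rle_cv_lim (Un := u) (Vn := fun _ => b)); auto; apply Un_cv_const. Qed.

Lemma Un_cv_ge_const u l b : (forall n, b <= u n) -> Un_cv u l -> b <= l.
Proof. intros H Hu; apply (Rle_cv_lim (Un := fun _ => b) (Vn := u)); auto; apply Un_cv_const. Qed.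

Definition Ser (a : nat -> R) (l : R) : Prop := Un_cv (rsum a) l.

Lemma infinite_sum_Ser a l : infinite_sum a l <-> Ser a l.
Proof.
  split; intros H e He; destruct (H e He) as [N HN].
  - exists (S N); intros n Hn. destruct n; [lia |]. rewrite <- sum_f_R0_rsum. apply HN; lia.
  - exists N; intros n Hn. rewrite sum_f_R0_rsum. apply HN; lia.
Qed.

Lemma Ser_unique a l1 l2 : Ser a l1 -> Ser a l2 -> l1 = l2.
Proof. apply UL_sequence. Qed.

Lemma Ser_ext a b l : (forall k, a k = b k) -> Ser a l -> Ser b l.
Proof. intros E; apply Un_cv_ext; intros; apply rsum_ext; auto. Qed.

Lemma Ser_plus a b la lb : Ser a la -> Ser b lb -> Ser (fun k => a k + b k) (la + lb).
Proof. intros Ha Hb; eapply Un_cv_ext; [| apply (CV_plus _ _ _ _ Ha Hb)]; intros; symmetry; apply rsum_plus. Qed.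

Lemma Ser_scal a la k : Ser a la -> Ser (fun j => k * a j) (k * la).
Proof. intros Ha; eapply Un_cv_ext; [| apply (Un_cv_scal _ _ k Ha)]; intros; symmetry; apply rsum_scal. Qed.

Lemma Ser_partial_le a l n : (forall k, 0 <= a k) -> Ser a l -> rsum a n <= l.
Proof.
  intros Hp Ha. apply (Un_cv_ge_const (fun m => rsum a (m + n)%nat)); [| apply CV_shift'; auto].
  intros m; apply rsum_mono; auto; lia.
Qed.

Lemma Ser_nonneg a l : (forall k, 0 <= a k) -> Ser a l -> 0 <= l.
Proof. intros Hp Ha. apply Rle_trans with (rsum a 0); [simpl; lra | apply Ser_partial_le; auto]. Qed.

Lemma Ser_bounded a M : (forall k, 0 <= a k) -> (forall n, rsum a n <= M) ->
  exists l, Ser a l /\ l <= M.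
Proof.
  intros Hp HM. destruct (growing_cv (rsum a)) as [l Hl].
  - intros n; simpl; specialize (Hp n); lra.
  - exists M; intros x [n ->]; auto.
  - exists l; split; auto. apply (Un_cv_le_const (rsum a)); auto.
Qed.

Lemma Ser_comparison a b lb : (forall k, 0 <= a k <= b k) -> Ser b lb ->
  exists la, Ser a la /\ la <= lb.
Proof.
  intros H Hb. apply Ser_bounded; [intros k; apply H |].
  intros n; apply Rle_trans with (rsum b n); [apply rsum_le; intros; apply H |].
  apply Ser_partial_le; auto. intros k; specialize (H k); lra.
Qed.

(** Absolute convergence implies convergence (positive and negative parts). *)
Lemma Ser_abs a b lb : (forall k, Rabs (a k) <= b k) -> Ser b lb -> exists la, Ser a la.
Proof.
  intros H Hb.
  destruct (Ser_comparison (fun k => Rmax (a k) 0) b lb) as [l1 [H1 _]]; auto.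
  { intros k; specialize (H k); split; [apply Rmax_r |].
    apply Rmax_lub; [eapply Rle_trans; [apply RRle_abs | auto] | eapply Rle_trans; [apply Rabs_pos | eauto]]. }
  destruct (Ser_comparison (fun k => Rmax (- a k) 0) b lb) as [l2 [H2 _]]; auto.
  { intros k; specialize (H k); split; [apply Rmax_r |].
    apply Rmax_lub; [eapply Rle_trans; [| eauto]; rewrite <- Rabs_Ropp; apply RRle_abs
                    | eapply Rle_trans; [apply Rabs_pos | eauto]]. }
  exists (l1 + (-1) * l2). eapply Ser_ext; [| apply (Ser_plus _ _ _ _ H1 (Ser_scal _ _ (-1) H2))].
  intros k; simpl. unfold Rmax; destruct (Rle_dec (a k) 0); destruct (Rle_dec (- a k) 0); lra.
Qed.

Lemma Ser_zero_terms a : (forall k, 0 <= a k) -> Ser a 0 -> forall k, a k = 0.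
Proof.
  intros Hp Ha k. pose proof (Ser_partial_le a 0 (S k) Hp Ha) as H; simpl in H.
  pose proof (rsum_nonneg a k Hp). specialize (Hp k); lra.
Qed.

Lemma series_sum_eq a l : Ser a l -> series_sum a = l.
Proof.
  intros H. unfold series_sum.
  pose proof (epsilon_spec (inhabits 0) (fun s => infinite_sum a s)
                (ex_intro _ l (proj2 (infinite_sum_Ser a l) H))) as E.
  apply infinite_sum_Ser in E. eapply Ser_unique; eauto.
Qed.

Lemma small_zero r : (forall eps, 0 < eps -> Rabs r <= eps) -> r = 0.
Proof.
  intros H. destruct (Req_dec r 0) as [| Hn]; auto. exfalso.
  assert (0 < Rabs r) by (apply Rabs_pos_lt; auto). specialize (H (Rabs r / 2) ltac:(lra)). lra.
Qed.

Lemma Cx_eq a b : re a = re b -> im a = im b -> a = b.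
Proof. destruct a, b; simpl; intros; subst; auto. Qed.

Ltac cx := repeat match goal with a : Cx |- _ => destruct a end; apply Cx_eq; simpl; ring.

Definition Cm1 : Cx := mkC (-1) 0.
Definition Ci : Cx := mkC 0 1.
Definition Creal (t : R) : Cx := mkC t 0.

Lemma Cmod2_nonneg a : 0 <= Cmod2 a.
Proof. unfold Cmod2; nra. Qed.

Lemma Cmod2_conj a : Cmod2 (Cconj a) = Cmod2 a.
Proof. unfold Cmod2; simpl; ring. Qed.

Lemma Cmod2_mul a b : Cmod2 (Cmul a b) = Cmod2 a * Cmod2 b.
Proof. unfold Cmod2; simpl; ring. Qed.

Lemma Cmod2_Creal t : Cmod2 (Creal t) = t * t.
Proof. unfold Cmod2, Creal; simpl; ring. Qed.

Lemma Cmod2_zero a : Cmod2 a = 0 -> a = C0.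
Proof. unfold Cmod2, C0; destruct a as [x y]; simpl; intros; apply Cx_eq; simpl; nra. Qed.

Lemma re_mul_conj_self a : re (Cmul a (Cconj a)) = Cmod2 a.
Proof. unfold Cmod2; simpl; ring. Qed.

Lemma re_mul_conj_bound a b : Rabs (re (Cmul a (Cconj b))) <= Cmod2 a + Cmod2 b.
Proof.
  unfold Cmod2; destruct a as [x y], b as [z w]; simpl.
  pose proof (Rle_0_sqr (x - z)); pose proof (Rle_0_sqr (x + z)); pose proof (Rle_0_sqr (y - w));
  pose proof (Rle_0_sqr (y + w)); pose proof (Rle_0_sqr (x - w)); pose proof (Rle_0_sqr (x + w));
  pose proof (Rle_0_sqr (y - z)); pose proof (Rle_0_sqr (y + z)); unfold Rsqr in *.
  apply Rabs_le; split; nra.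
Qed.

Lemma im_mul_conj_bound a b : Rabs (im (Cmul a (Cconj b))) <= Cmod2 a + Cmod2 b.
Proof.
  unfold Cmod2; destruct a as [x y], b as [z w]; simpl.
  pose proof (Rle_0_sqr (x - z)); pose proof (Rle_0_sqr (x + z)); pose proof (Rle_0_sqr (y - w));
  pose proof (Rle_0_sqr (y + w)); pose proof (Rle_0_sqr (x - w)); pose proof (Rle_0_sqr (x + w));
  pose proof (Rle_0_sqr (y - z)); pose proof (Rle_0_sqr (y + z)); unfold Rsqr in *.
  apply Rabs_le; split; nra.
Qed.

Lemma Cmod2_lin a x y : Cmod2 (Cadd (Cmul a x) y) <= 2 * Cmod2 a * Cmod2 x + 2 * Cmod2 y.
Proof.
  rewrite Rmult_assoc, <- Cmod2_mul. generalize (Cmul a x); intros p.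
  unfold Cmod2; destruct p as [p1 p2], y as [y1 y2]; simpl.
  pose proof (Rle_0_sqr (p1 - y1)); pose proof (Rle_0_sqr (p2 - y2)); unfold Rsqr in *. nra.
Qed.

Lemma re_mul_le a z : re (Cmul a z) <= sqrt (Cmod2 a) * sqrt (Cmod2 z).
Proof.
  rewrite <- sqrt_mult by apply Cmod2_nonneg. rewrite <- Cmod2_mul.
  generalize (Cmul a z); intros [p q]. unfold Cmod2; simpl.
  destruct (Rle_dec p 0). { pose proof (sqrt_pos (p * p + q * q)); lra. }
  apply Rsqr_incr_0_var; [| apply sqrt_pos]. rewrite Rsqr_sqrt by nra. unfold Rsqr; nra.
Qed.

Definition n2 (c : nat -> Cx) : R := series_sum (fun n => Cmod2 (c n)).

Definition lin (a : Cx) (c d : nat -> Cx) : nat -> Cx := fun n => Cadd (Cmul a (c n)) (d n).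

Lemma is_l2_Ser c : is_l2 c <-> exists l, Ser (fun n => Cmod2 (c n)) l.
Proof. split; intros [l H]; exists l; apply infinite_sum_Ser; auto. Qed.

Lemma l2_Ser c : is_l2 c -> Ser (fun n => Cmod2 (c n)) (n2 c).
Proof. intros H; apply is_l2_Ser in H as [l Hl]. unfold n2; rewrite (series_sum_eq _ _ Hl); auto. Qed.

Lemma n2_nonneg c : is_l2 c -> 0 <= n2 c.
Proof. intros H; eapply Ser_nonneg; [| apply l2_Ser; auto]; intros; apply Cmod2_nonneg. Qed.

Lemma n2_ext c d : (forall k, c k = d k) -> n2 c = n2 d.
Proof. intros E; f_equal; apply functional_extensionality; auto. Qed.

Lemma n2_zero c : is_l2 c -> n2 c = 0 -> forall k, c k = C0.
Proof.
  intros Hc H0 k. apply Cmod2_zero.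
  apply (Ser_zero_terms (fun n => Cmod2 (c n))); [intros; apply Cmod2_nonneg |].
  rewrite <- H0; apply l2_Ser; auto.
Qed.

Lemma zero_seq_l2 : is_l2 zero_seq /\ n2 zero_seq = 0.
Proof.
  assert (H : Ser (fun n => Cmod2 (zero_seq n)) 0).
  { eapply Un_cv_ext; [| apply Un_cv_const]. intros n; simpl. rewrite <- (rsum_zero n).
    apply rsum_ext; intros; unfold zero_seq, Cmod2, C0; simpl; ring. }
  split; [apply is_l2_Ser; eauto | apply series_sum_eq, H].
Qed.

Lemma l2_lin a c d : is_l2 c -> is_l2 d -> is_l2 (lin a c d).
Proof.
  intros Hc Hd. apply l2_Ser in Hc; apply l2_Ser in Hd. apply is_l2_Ser.
  destruct (Ser_comparison (fun n => Cmod2 (lin a c d n))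
              (fun n => 2 * Cmod2 a * Cmod2 (c n) + 2 * Cmod2 (d n))
              (2 * Cmod2 a * n2 c + 2 * n2 d)) as [l [Hl _]].
  - intros; split; [apply Cmod2_nonneg | apply Cmod2_lin].
  - apply Ser_plus; apply Ser_scal; auto.
  - exists l; auto.
Qed.

Lemma l2inner_re_Ser c d : is_l2 c -> is_l2 d ->
  Ser (fun n => re (Cmul (c n) (Cconj (d n)))) (re (l2inner c d)).
Proof.
  intros Hc Hd. apply l2_Ser in Hc; apply l2_Ser in Hd.
  destruct (Ser_abs _ _ _ (fun k => re_mul_conj_bound (c k) (d k)) (Ser_plus _ _ _ _ Hc Hd)) as [l Hl].
  change (re (l2inner c d)) with (series_sum (fun n => re (Cmul (c n) (Cconj (d n))))).
  rewrite (series_sum_eq _ _ Hl); auto.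
Qed.

Lemma l2inner_im_Ser c d : is_l2 c -> is_l2 d ->
  Ser (fun n => im (Cmul (c n) (Cconj (d n)))) (im (l2inner c d)).
Proof.
  intros Hc Hd. apply l2_Ser in Hc; apply l2_Ser in Hd.
  destruct (Ser_abs _ _ _ (fun k => im_mul_conj_bound (c k) (d k)) (Ser_plus _ _ _ _ Hc Hd)) as [l Hl].
  change (im (l2inner c d)) with (series_sum (fun n => im (Cmul (c n) (Cconj (d n))))).
  rewrite (series_sum_eq _ _ Hl); auto.
Qed.

Lemma l2inner_ext c d e f : (forall k, c k = d k) -> (forall k, e k = f k) ->
  l2inner c e = l2inner d f.
Proof.
  intros E1 E2. replace d with c by (apply functional_extensionality; auto).
  replace f with e by (apply functional_extensionality; auto). auto.
Qed.

Lemma l2inner_self_re c : re (l2inner c c) = n2 c.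
Proof. simpl. unfold n2. f_equal. apply functional_extensionality; intros; apply re_mul_conj_self. Qed.

Lemma l2inner_lin_l a c d e : is_l2 c -> is_l2 d -> is_l2 e ->
  l2inner (lin a c d) e = Cadd (Cmul a (l2inner c e)) (l2inner d e).
Proof.
  intros Hc Hd He.
  pose proof (l2inner_re_Ser _ _ Hc He) as R1. pose proof (l2inner_im_Ser _ _ Hc He) as I1.
  pose proof (l2inner_re_Ser _ _ Hd He) as R2. pose proof (l2inner_im_Ser _ _ Hd He) as I2.
  pose proof (l2_lin a c d Hc Hd) as Hl.
  pose proof (l2inner_re_Ser _ _ Hl He) as R3. pose proof (l2inner_im_Ser _ _ Hl He) as I3.
  revert R1 I1 R2 I2 R3 I3. generalize (l2inner c e) (l2inner d e) (l2inner (lin a c d) e).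
  intros X Y Z R1 I1 R2 I2 R3 I3. apply Cx_eq.
  - transitivity (re a * re X + - im a * im X + re Y); [| destruct a, X, Y; simpl; ring].
    eapply Ser_unique; [exact R3 |].
    eapply Ser_ext; [| apply (Ser_plus _ _ _ _ (Ser_plus _ _ _ _ (Ser_scal _ _ (re a) R1)
                                                   (Ser_scal _ _ (- im a) I1)) R2)].
    intros k; unfold lin, Cmul, Cconj, Cadd; simpl; ring.
  - transitivity (re a * im X + im a * re X + im Y); [| destruct a, X, Y; simpl; ring].
    eapply Ser_unique; [exact I3 |].
    eapply Ser_ext; [| apply (Ser_plus _ _ _ _ (Ser_plus _ _ _ _ (Ser_scal _ _ (re a) I1)
                                                   (Ser_scal _ _ (im a) R1)) I2)].
    intros k; unfold lin, Cmul, Cconj, Cadd; simpl; ring.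
Qed.

Lemma l2inner_conj c d : is_l2 c -> is_l2 d -> l2inner d c = Cconj (l2inner c d).
Proof.
  intros Hc Hd.
  pose proof (l2inner_re_Ser _ _ Hc Hd) as R1. pose proof (l2inner_im_Ser _ _ Hc Hd) as I1.
  pose proof (l2inner_re_Ser _ _ Hd Hc) as R2. pose proof (l2inner_im_Ser _ _ Hd Hc) as I2.
  revert R1 I1 R2 I2. generalize (l2inner c d) (l2inner d c). intros X Y R1 I1 R2 I2.
  apply Cx_eq.
  - transitivity (re X); [| destruct X; simpl; ring].
    eapply Ser_unique; [exact R2 |]. eapply Ser_ext; [| exact R1]. intros k; unfold Cmul, Cconj; simpl; ring.
  - transitivity (-1 * im X); [| destruct X; simpl; ring].
    eapply Ser_unique; [exact I2 |]. eapply Ser_ext; [| apply (Ser_scal _ _ (-1) I1)].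
    intros k; unfold Cmul, Cconj; simpl; ring.
Qed.

Lemma n2_orth_sum c d : is_l2 c -> is_l2 d -> l2inner c d = C0 ->
  n2 (lin Defs.C1 c d) = n2 c + n2 d.
Proof.
  intros Hc Hd H0. rewrite <- !l2inner_self_re.
  pose proof (l2_lin Defs.C1 c d Hc Hd) as Hl.
  rewrite l2inner_lin_l, (l2inner_conj (lin Defs.C1 c d) c), (l2inner_conj (lin Defs.C1 c d) d) by auto.
  rewrite !l2inner_lin_l, (l2inner_conj c d), H0 by auto.
  destruct (l2inner c c), (l2inner d d); simpl; ring.
Qed.

Arguments hadd_assoc {h}. Arguments hadd_comm {h}. Arguments hadd_0 {h}. Arguments hadd_opp {h}.
Arguments hscal_1 {h}. Arguments hscal_assoc {h}. Arguments hscal_distr_v {h}.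
Arguments hscal_distr_s {h}. Arguments inner_add_l {h}. Arguments inner_scal_l {h}.
Arguments inner_conj {h}. Arguments inner_pos {h}. Arguments inner_def {h}.

Section InnerProductSpace.
Context {X : HSpace}.
Implicit Types x y z : X.

Lemma hadd_0l x : hadd hz x = x.
Proof. rewrite hadd_comm; apply hadd_0. Qed.

Lemma hadd_cancel x y z : hadd x y = hadd x z -> y = z.
Proof.
  intros E. rewrite <- (hadd_0l y), <- (hadd_0l z), <- (hadd_opp x), (hadd_comm x).
  rewrite <- !hadd_assoc, E; auto.
Qed.

Lemma hadd_swap4 (a b c d : X) : hadd (hadd a b) (hadd c d) = hadd (hadd a c) (hadd b d).
Proof. rewrite <- !hadd_assoc. f_equal. rewrite !hadd_assoc. f_equal. apply hadd_comm. Qed.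

Lemma hscal_0 x : hscal Defs.C0 x = hz.
Proof.
  apply (hadd_cancel (hscal Defs.C0 x)). rewrite hadd_0, <- hscal_distr_s. f_equal. cx.
Qed.

Lemma hscal_z a : hscal a (@hz X) = hz.
Proof. rewrite <- (hscal_0 hz), hscal_assoc. f_equal. cx. Qed.

Lemma hopp_scal x : hopp x = hscal Cm1 x.
Proof.
  assert (E : hadd x (hscal Cm1 x) = hz).
  { rewrite <- (hscal_1 x) at 1. rewrite <- hscal_distr_s, <- (hscal_0 x). f_equal. cx. }
  apply (hadd_cancel x). rewrite hadd_opp, E; auto.
Qed.

Lemma hsub_scal x y : hsub x y = hadd x (hscal Cm1 y).
Proof. unfold hsub; rewrite hopp_scal; auto. Qed.

Lemma hsub_diag x : hsub x x = hz.
Proof. apply hadd_opp. Qed.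

Lemma hsub_0 x : hsub x hz = x.
Proof. rewrite hsub_scal, hscal_z, hadd_0; auto. Qed.

Lemma hsub_eq x y : hsub x y = hz -> x = y.
Proof.
  unfold hsub; intros E.
  rewrite <- (hadd_0 x), <- (hadd_opp y), (hadd_comm y), hadd_assoc, E, hadd_0l; auto.
Qed.

Lemma hsub_chain x y z : hsub x z = hadd (hsub x y) (hsub y z).
Proof.
  unfold hsub. rewrite <- hadd_assoc, (hadd_assoc (hopp y)), (hadd_comm (hopp y) y), hadd_opp, hadd_0l.
  auto.
Qed.

Lemma hadd_hsub x y : hadd y (hsub x y) = x.
Proof. unfold hsub. rewrite (hadd_comm y), <- hadd_assoc, (hadd_comm (hopp y)), hadd_opp, hadd_0; auto. Qed.

Lemma hsub_add4 (a b c d : X) : hsub (hadd a b) (hadd c d) = hadd (hsub a c) (hsub b d).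
Proof. rewrite !hsub_scal, hscal_distr_v. apply hadd_swap4. Qed.

Lemma hsub_hadd (f a b : X) : hsub f (hadd a b) = hsub (hsub f a) b.
Proof. unfold hsub. rewrite !hopp_scal, hscal_distr_v, hadd_assoc; auto. Qed.

Lemma hsub_hadd_l (w a v : X) : hsub (hadd w a) v = hadd (hsub w v) a.
Proof. unfold hsub. rewrite <- !hadd_assoc, (hadd_comm a); auto. Qed.

Lemma hscal_sub a x y : hsub (hscal a x) (hscal a y) = hscal a (hsub x y).
Proof. rewrite !hsub_scal, hscal_distr_v, !hscal_assoc. f_equal. f_equal. cx. Qed.

Lemma lin_sub a x y x' y' :
  hsub (hadd (hscal a x) y) (hadd (hscal a x') y') = hadd (hscal a (hsub x x')) (hsub y y').
Proof. rewrite hsub_add4, hscal_sub; auto. Qed.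

Lemma inner_add_r x y z : hinner x (hadd y z) = Cadd (hinner x y) (hinner x z).
Proof. rewrite inner_conj, inner_add_l, (inner_conj y x), (inner_conj z x). cx. Qed.

Lemma inner_scal_r a x y : hinner x (hscal a y) = Cmul (Cconj a) (hinner x y).
Proof. rewrite inner_conj, inner_scal_l, (inner_conj y x). cx. Qed.

Lemma inner_0_l y : hinner hz y = Defs.C0.
Proof. rewrite <- (hscal_0 hz), inner_scal_l. cx. Qed.

Lemma inner_sub_l x y z : hinner (hsub x y) z = Cadd (hinner x z) (Cmul Cm1 (hinner y z)).
Proof. rewrite hsub_scal, inner_add_l, inner_scal_l; auto. Qed.

Lemma inner_sub_r x y z : hinner z (hsub x y) = Cadd (hinner z x) (Cmul Cm1 (hinner z y)).
Proof. rewrite hsub_scal, inner_add_r, inner_scal_r. f_equal. unfold Cm1; cx. Qed.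

Lemma im_inner_self x : im (hinner x x) = 0.
Proof. pose proof (f_equal im (inner_conj x x)) as E. simpl in E. lra. Qed.

Lemma re_inner_sym x y : re (hinner y x) = re (hinner x y).
Proof. rewrite inner_conj; simpl; auto. Qed.

Lemma im_as_re x y : im (hinner x y) = re (hinner x (hscal Ci y)).
Proof. rewrite inner_scal_r. unfold Ci; simpl; ring. Qed.

Lemma re_inner_Creal_r x y t : re (hinner x (hscal (Creal t) y)) = t * re (hinner x y).
Proof. rewrite inner_scal_r. unfold Creal; simpl. ring. Qed.

Lemma hnorm_nonneg x : 0 <= hnorm x.
Proof. apply sqrt_pos. Qed.

Lemma hnorm_sq x : hnorm x ^ 2 = re (hinner x x).
Proof. unfold hnorm; rewrite pow2_sqrt; auto; apply inner_pos. Qed.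

Lemma hnorm_sq_zero x : re (hinner x x) = 0 -> x = hz.
Proof. intros E; apply inner_def. apply Cx_eq; [rewrite E | rewrite im_inner_self]; auto. Qed.

Lemma hnorm_zero x : hnorm x = 0 -> x = hz.
Proof. intros E; apply hnorm_sq_zero. rewrite <- hnorm_sq, E; ring. Qed.

Lemma hnorm_z : hnorm (@hz X) = 0.
Proof. unfold hnorm; rewrite inner_0_l; simpl; apply sqrt_0. Qed.

Lemma normsq_add x y :
  re (hinner (hadd x y) (hadd x y)) = re (hinner x x) + 2 * re (hinner x y) + re (hinner y y).
Proof. rewrite inner_add_l, !inner_add_r. simpl. rewrite (re_inner_sym x y); ring. Qed.

Lemma normsq_scal a x : re (hinner (hscal a x) (hscal a x)) = Cmod2 a * re (hinner x x).
Proof. rewrite inner_scal_l, inner_scal_r. unfold Cmod2; simpl. rewrite im_inner_self. ring. Qed.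

Lemma normsq_sub x y :
  re (hinner (hsub x y) (hsub x y)) = re (hinner x x) - 2 * re (hinner x y) + re (hinner y y).
Proof. rewrite hsub_scal, normsq_add, normsq_scal, inner_scal_r. unfold Cm1, Cmod2; simpl. ring. Qed.

Lemma hnorm_scal a x : hnorm (hscal a x) = sqrt (Cmod2 a) * hnorm x.
Proof. unfold hnorm; rewrite normsq_scal, sqrt_mult; auto; [apply Cmod2_nonneg | apply inner_pos]. Qed.

Lemma hnorm_Creal t x : hnorm (hscal (Creal t) x) = Rabs t * hnorm x.
Proof. rewrite hnorm_scal, Cmod2_Creal. f_equal. rewrite <- Rsqr_def. apply sqrt_Rsqr_abs. Qed.

Lemma discriminant_le a b c : 0 <= a -> (forall t, 0 <= a * t * t + 2 * b * t + c) -> b * b <= a * c.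
Proof.
  intros Ha H. destruct (Req_dec a 0) as [E | E].
  - subst. destruct (Req_dec b 0) as [-> | Hb]; [lra |].
    specialize (H (- (Rabs c + 1) / (2 * b))). exfalso.
    assert (2 * b * (- (Rabs c + 1) / (2 * b)) = - (Rabs c + 1)) by (field; auto).
    pose proof (Rle_abs c). lra.
  - specialize (H (- b / a)).
    assert (E2 : a * (- b / a) * (- b / a) + 2 * b * (- b / a) + c = (a * c - b * b) / a) by (field; auto).
    rewrite E2 in H. assert (0 < a) by lra.
    apply Rmult_le_compat_r with (r := a) in H; [| lra]. unfold Rdiv in H.
    rewrite Rmult_assoc, Rinv_l in H; lra.
Qed.

Lemma cauchy_schwarz_re x y : re (hinner x y) <= hnorm x * hnorm y.
Proof.
  assert (Hd : re (hinner x y) * re (hinner x y) <= re (hinner y y) * re (hinner x x)).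
  { apply discriminant_le; [apply inner_pos |]. intros t.
    pose proof (inner_pos (hadd x (hscal (Creal t) y))) as P.
    rewrite normsq_add, normsq_scal, re_inner_Creal_r, Cmod2_Creal in P. nra. }
  destruct (Rle_dec (re (hinner x y)) 0) as [Hn | Hp].
  - pose proof (hnorm_nonneg x); pose proof (hnorm_nonneg y). nra.
  - apply Rsqr_incr_0_var; [| apply Rmult_le_pos; apply hnorm_nonneg].
    unfold Rsqr. replace (hnorm x * hnorm y * (hnorm x * hnorm y)) with (hnorm x ^ 2 * hnorm y ^ 2) by ring.
    rewrite !hnorm_sq. lra.
Qed.

Lemma cauchy_schwarz_abs x y : Rabs (re (hinner x y)) <= hnorm x * hnorm y.
Proof.
  apply Rabs_le; split; [| apply cauchy_schwarz_re].
  pose proof (cauchy_schwarz_re (hscal Cm1 x) y) as H. rewrite inner_scal_l, hnorm_scal in H.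
  unfold Cm1, Cmod2 in H; simpl in H. replace (-1 * -1 + 0 * 0) with 1 in H by ring.
  rewrite sqrt_1 in H. lra.
Qed.

Lemma hnorm_triang x y : hnorm (hadd x y) <= hnorm x + hnorm y.
Proof.
  apply Rsqr_incr_0_var; [| pose proof (hnorm_nonneg x); pose proof (hnorm_nonneg y); lra].
  unfold Rsqr. replace (hnorm (hadd x y) * hnorm (hadd x y)) with (hnorm (hadd x y) ^ 2) by ring.
  rewrite hnorm_sq, normsq_add. pose proof (cauchy_schwarz_re x y). rewrite <- !hnorm_sq. nra.
Qed.

Lemma hnorm_sub_triang x y z : hnorm (hsub x z) <= hnorm (hsub x y) + hnorm (hsub y z).
Proof. rewrite (hsub_chain x y z); apply hnorm_triang. Qed.

Lemma hnorm_sub_sym x y : hnorm (hsub x y) = hnorm (hsub y x).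
Proof. unfold hnorm. rewrite !normsq_sub, (re_inner_sym x y). f_equal; ring. Qed.

Lemma hnorm_sub_lower x y : hnorm x - hnorm y <= hnorm (hsub x y).
Proof. pose proof (hnorm_sub_triang x y hz) as H. rewrite !hsub_0 in H. lra. Qed.

Lemma hnorm_lin_small a x y e : 0 < e ->
  hnorm x < e / 2 / (sqrt (Cmod2 a) + 1) -> hnorm y < e / 2 -> hnorm (hadd (hscal a x) y) < e.
Proof.
  intros He Hx Hy. pose proof (sqrt_pos (Cmod2 a)). pose proof (hnorm_nonneg x).
  eapply Rle_lt_trans; [apply hnorm_triang |]. rewrite hnorm_scal.
  assert (sqrt (Cmod2 a) * hnorm x <= e / 2).
  { apply Rle_trans with ((sqrt (Cmod2 a) + 1) * (e / 2 / (sqrt (Cmod2 a) + 1))); [| right; field; lra].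
    apply Rmult_le_compat; lra. }
  lra.
Qed.

End InnerProductSpace.

Section SpansAndSeries.
Context {X : HSpace}.
Implicit Types x y z : X.
Implicit Types f g u : nat -> X.

Lemma hpsum_ext f g n : (forall k, f k = g k) -> hpsum f n = hpsum g n.
Proof. intros E; induction n; simpl; [auto | rewrite IHn, E; auto]. Qed.

Lemma hpsum_lin a f g n :
  hpsum (fun k => hadd (hscal a (f k)) (g k)) n = hadd (hscal a (hpsum f n)) (hpsum g n).
Proof.
  induction n; simpl; [rewrite hscal_z, hadd_0; auto |].
  rewrite IHn, hscal_distr_v. apply hadd_swap4.
Qed.

Lemma re_inner_hpsum f n y : re (hinner (hpsum f n) y) = rsum (fun k => re (hinner (f k) y)) n.
Proof. induction n; simpl; [rewrite inner_0_l; auto | rewrite inner_add_l; simpl; rewrite IHn; auto]. Qed.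

Lemma im_inner_hpsum f n y : im (hinner (hpsum f n) y) = rsum (fun k => im (hinner (f k) y)) n.
Proof. induction n; simpl; [rewrite inner_0_l; auto | rewrite inner_add_l; simpl; rewrite IHn; auto]. Qed.

Definition coef_below (a : nat -> Cx) (n : nat) : nat -> Cx :=
  fun j => if (j <? n)%nat then a j else Defs.C0.
Definition coef_from (a : nat -> Cx) (n : nat) : nat -> Cx :=
  fun k => if (n <=? k)%nat then a k else Defs.C0.

Lemma hpsum_pad u a n m : (n <= m)%nat ->
  hpsum (fun j => hscal (a j) (u j)) n = hpsum (fun j => hscal (coef_below a n j) (u j)) m.
Proof.
  intros H. induction H.
  - assert (Hk : forall k, (k <= n)%nat ->
              hpsum (fun j => hscal (a j) (u j)) k = hpsum (fun j => hscal (coef_below a n j) (u j)) k).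
    { induction k; intros Hk; simpl; auto. rewrite IHk by lia. unfold coef_below.
      replace (k <? n)%nat with true by (symmetry; apply Nat.ltb_lt; lia). auto. }
    apply Hk; lia.
  - simpl. rewrite <- IHle. unfold coef_below.
    replace (m <? n)%nat with false by (symmetry; apply Nat.ltb_ge; lia).
    rewrite hscal_0, hadd_0; auto.
Qed.

Lemma hpsum_tail u c n m : (n <= m)%nat ->
  hsub (hpsum (fun k => hscal (c k) (u k)) m) (hpsum (fun k => hscal (c k) (u k)) n)
  = hpsum (fun k => hscal (coef_from c n k) (u k)) m.
Proof.
  intros H. induction H.
  - rewrite hsub_diag. symmetry.
    assert (Hk : forall k, (k <= n)%nat -> hpsum (fun j => hscal (coef_from c n j) (u j)) k = hz);
      [| apply Hk; lia].
    induction k; intros; simpl; auto. rewrite IHk by lia. unfold coef_from.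
    replace (n <=? k)%nat with false by (symmetry; apply Nat.leb_gt; lia). rewrite hscal_0, hadd_0; auto.
  - simpl. rewrite <- IHle. unfold coef_from.
    replace (n <=? m)%nat with true by (symmetry; apply Nat.leb_le; lia).
    rewrite !hsub_scal, <- !hadd_assoc. f_equal. apply hadd_comm.
Qed.

Lemma rsum_coef_from (c : nat -> Cx) n m : (n <= m)%nat ->
  rsum (fun k => Cmod2 (coef_from c n k)) m = rsum (fun k => Cmod2 (c k)) m - rsum (fun k => Cmod2 (c k)) n.
Proof.
  intros H. induction H.
  - assert (Hk : forall k, (k <= n)%nat -> rsum (fun j => Cmod2 (coef_from c n j)) k = 0);
      [| rewrite Hk; lia || ring].
    induction k; intros; simpl; auto. rewrite IHk by lia. unfold coef_from.
    replace (n <=? k)%nat with false by (symmetry; apply Nat.leb_gt; lia). unfold Cmod2, Defs.C0; simpl; ring.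
  - simpl. rewrite IHle. unfold coef_from.
    replace (n <=? m)%nat with true by (symmetry; apply Nat.leb_le; lia). ring.
Qed.

Lemma in_span_lin u a x y : in_span u x -> in_span u y -> in_span u (hadd (hscal a x) y).
Proof.
  intros [n [b ->]] [m [c ->]]. exists (max n m), (fun j => Cadd (Cmul a (coef_below b n j)) (coef_below c m j)).
  rewrite (hpsum_pad u b n (max n m)), (hpsum_pad u c m (max n m)) by lia.
  rewrite <- hpsum_lin. apply hpsum_ext. intros k. rewrite hscal_assoc, hscal_distr_s; auto.
Qed.

Lemma in_span_cspan u x : in_span u x -> in_cspan u x.
Proof. intros H e He; exists x; split; auto. rewrite hsub_diag, hnorm_z; auto. Qed.

Lemma in_cspan_z u : in_cspan u hz.
Proof. apply in_span_cspan. exists O, (fun _ => Defs.C0); auto. Qed.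

Lemma in_cspan_lin u a x y : in_cspan u x -> in_cspan u y -> in_cspan u (hadd (hscal a x) y).
Proof.
  intros Hx Hy e He. pose proof (sqrt_pos (Cmod2 a)).
  destruct (Hx (e / 2 / (sqrt (Cmod2 a) + 1))) as [x' [Sx Nx]]. { apply Rdiv_lt_0_compat; lra. }
  destruct (Hy (e / 2)) as [y' [Sy Ny]]. { lra. }
  exists (hadd (hscal a x') y'); split; [apply in_span_lin; auto |].
  rewrite lin_sub. apply hnorm_lin_small; auto.
Qed.

Lemma in_cspan_scal u a x : in_cspan u x -> in_cspan u (hscal a x).
Proof. intros H. rewrite <- (hadd_0 (hscal a x)). apply in_cspan_lin; auto; apply in_cspan_z. Qed.

Lemma in_cspan_sub u x y : in_cspan u x -> in_cspan u y -> in_cspan u (hsub x y).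
Proof. intros Hx Hy. rewrite hsub_scal, hadd_comm. apply in_cspan_lin; auto. Qed.

Lemma in_cspan_add u x y : in_cspan u x -> in_cspan u y -> in_cspan u (hadd x y).
Proof. intros Hx Hy. rewrite <- (hscal_1 x). apply in_cspan_lin; auto. Qed.

Lemma in_cspan_closed u w :
  (forall eps, 0 < eps -> exists y, in_cspan u y /\ hnorm (hsub w y) < eps) -> in_cspan u w.
Proof.
  intros H e He. destruct (H (e / 2) ltac:(lra)) as [y [Hy N1]]. destruct (Hy (e / 2) ltac:(lra)) as [z [Hz N2]].
  exists z; split; auto. eapply Rle_lt_trans; [apply (hnorm_sub_triang w y z) | lra].
Qed.

Lemma orth_span u h : (forall j, hinner h (u j) = Defs.C0) -> forall w, in_span u w -> hinner h w = Defs.C0.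
Proof.
  intros Hj w [n [a ->]]. rewrite inner_conj.
  assert (Hk : forall k, hinner (hscal (a k) (u k)) h = Defs.C0).
  { intros k. rewrite inner_scal_l, inner_conj, Hj. cx. }
  apply Cx_eq; simpl; [rewrite re_inner_hpsum | rewrite im_inner_hpsum];
    rewrite (rsum_ext _ (fun _ => 0)), rsum_zero by (intros k; rewrite Hk; auto); simpl; ring.
Qed.

Lemma orth_cspan_re u h : (forall j, hinner h (u j) = Defs.C0) ->
  forall w, in_cspan u w -> re (hinner h w) = 0.
Proof.
  intros Hj w Hw. apply small_zero. intros e He. pose proof (hnorm_nonneg h).
  destruct (Hw (e / (hnorm h + 1))) as [y [Hy Hn]]. { apply Rdiv_lt_0_compat; lra. }
  assert (E : re (hinner h w) = re (hinner h (hsub w y))).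
  { rewrite inner_sub_r, (orth_span u h Hj y Hy). simpl; ring. }
  rewrite E. eapply Rle_trans; [apply cauchy_schwarz_abs |]. pose proof (hnorm_nonneg (hsub w y)).
  apply Rle_trans with (hnorm h * (e / (hnorm h + 1))); [apply Rmult_le_compat_l; lra |].
  apply Rle_trans with ((hnorm h + 1) * (e / (hnorm h + 1)));
    [apply Rmult_le_compat_r; [apply Rlt_le, Rdiv_lt_0_compat |]; lra | right; field; lra].
Qed.

Lemma orth_cspan u h : (forall j, hinner h (u j) = Defs.C0) ->
  forall w, in_cspan u w -> hinner h w = Defs.C0.
Proof.
  intros Hj w Hw. apply Cx_eq; [apply orth_cspan_re with u; auto |].
  rewrite im_as_re. apply orth_cspan_re with u; auto. apply in_cspan_scal; auto.
Qed.

Lemma has_sum_unique f x y : has_sum f x -> has_sum f y -> x = y.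
Proof.
  intros Hx Hy. apply hsub_eq, hnorm_zero, small_zero. intros e He.
  rewrite Rabs_right by apply Rle_ge, hnorm_nonneg.
  destruct (Hx (e / 2) ltac:(lra)) as [N1 H1]. destruct (Hy (e / 2) ltac:(lra)) as [N2 H2].
  specialize (H1 (max N1 N2) (Nat.le_max_l _ _)); specialize (H2 (max N1 N2) (Nat.le_max_r _ _)).
  pose proof (hnorm_sub_triang x (hpsum f (max N1 N2)) y) as T.
  rewrite (hnorm_sub_sym x (hpsum f _)) in T. lra.
Qed.

Lemma has_sum_ext f1 f2 x : (forall k, f1 k = f2 k) -> has_sum f1 x -> has_sum f2 x.
Proof.
  intros E H e He; destruct (H e He) as [N HN]; exists N; intros n Hn.
  rewrite <- (hpsum_ext f1 f2 n E); auto.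
Qed.

Lemma has_sum_lin a f g x y : has_sum f x -> has_sum g y ->
  has_sum (fun k => hadd (hscal a (f k)) (g k)) (hadd (hscal a x) y).
Proof.
  intros Hx Hy e He. pose proof (sqrt_pos (Cmod2 a)).
  destruct (Hx (e / 2 / (sqrt (Cmod2 a) + 1))) as [N1 H1]. { apply Rdiv_lt_0_compat; lra. }
  destruct (Hy (e / 2)) as [N2 H2]. { lra. }
  exists (max N1 N2); intros n Hn. rewrite hpsum_lin, lin_sub.
  apply hnorm_lin_small; [lra | apply H1 | apply H2]; lia.
Qed.

Lemma has_sum_inner_re f x y : has_sum f x -> Un_cv (fun n => re (hinner (hpsum f n) y)) (re (hinner x y)).
Proof.
  intros H e He. pose proof (hnorm_nonneg y).
  destruct (H (e / (hnorm y + 1))) as [N HN]. { apply Rdiv_lt_0_compat; lra. }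
  exists N; intros n Hn. specialize (HN n Hn). unfold Rdist.
  replace (re (hinner (hpsum f n) y) - re (hinner x y)) with (re (hinner (hsub (hpsum f n) x) y))
    by (rewrite inner_sub_l; simpl; ring).
  eapply Rle_lt_trans; [apply cauchy_schwarz_abs |]. pose proof (hnorm_nonneg (hsub (hpsum f n) x)).
  apply Rle_lt_trans with ((e / (hnorm y + 1)) * hnorm y); [apply Rmult_le_compat_r; lra |].
  apply Rlt_le_trans with ((e / (hnorm y + 1)) * (hnorm y + 1));
    [apply Rmult_lt_compat_l; [apply Rdiv_lt_0_compat |]; lra | right; field; lra].
Qed.

Lemma has_sum_inner_im f x y : has_sum f x -> Un_cv (fun n => im (hinner (hpsum f n) y)) (im (hinner x y)).
Proof.
  intros H. eapply Un_cv_ext; [| rewrite im_as_re; apply (has_sum_inner_re _ _ (hscal Ci y) H)].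
  intros; simpl; rewrite im_as_re; auto.
Qed.

Lemma has_sum_norm f x : has_sum f x -> Un_cv (fun n => hnorm (hpsum f n)) (hnorm x).
Proof.
  intros H e He. destruct (H e He) as [N HN]. exists N; intros n Hn. specialize (HN n Hn).
  pose proof (hnorm_sub_lower (hpsum f n) x). pose proof (hnorm_sub_lower x (hpsum f n)).
  rewrite hnorm_sub_sym in H1. unfold Rdist. apply Rabs_def1; lra.
Qed.

Lemma has_sum_cspan u c x : has_sum (fun k => hscal (c k) (u k)) x -> in_cspan u x.
Proof.
  intros H e He. destruct (H e He) as [N HN]. exists (hpsum (fun k => hscal (c k) (u k)) N). split.
  - exists N, c; auto.
  - rewrite hnorm_sub_sym; apply HN; lia.
Qed.

End SpansAndSeries.

Lemma rsum_cauchy_schwarz (a b : nat -> R) n : (forall k, 0 <= a k) -> (forall k, 0 <= b k) ->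
  rsum (fun k => a k * b k) n <= sqrt (rsum (fun k => a k * a k) n) * sqrt (rsum (fun k => b k * b k) n).
Proof.
  intros Ha Hb. rewrite <- sqrt_mult by (apply rsum_nonneg; intros; nra).
  apply Rsqr_incr_0_var; [| apply sqrt_pos]. rewrite Rsqr_sqrt by (apply Rmult_le_pos; apply rsum_nonneg; intros; nra).
  unfold Rsqr. rewrite (Rmult_comm (rsum (fun k => a k * a k) n)).
  apply discriminant_le; [apply rsum_nonneg; intros; nra |]. intros t.
  assert (E : rsum (fun k => b k * b k) n * t * t + 2 * rsum (fun k => a k * b k) n * t + rsum (fun k => a k * a k) n
              = rsum (fun k => (b k * t + a k) * (b k * t + a k)) n).
  { clear. induction n; simpl; [ring | rewrite <- IHn; ring]. }
  rewrite E; apply rsum_nonneg; intros; apply Rle_0_sqr.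
Qed.

Lemma le_of_sq_le_mul x y : 0 <= x -> 0 <= y -> x * x <= x * y -> x <= y.
Proof. intros Hx Hy H. destruct (Req_dec x 0) as [-> | Hn]; [lra | nra]. Qed.

Lemma sqrt_le_sqrt_mult_sq B r x : 0 <= B -> 0 <= x -> r <= B * x ^ 2 -> sqrt r <= sqrt B * x.
Proof.
  intros HB Hx H. rewrite <- (sqrt_pow2 x Hx), <- sqrt_mult by (auto; apply pow2_ge_0).
  apply sqrt_le_1_alt, H.
Qed.

Section BesselSequences.
Context {X : HSpace}.
Implicit Types x y z h : X.

Definition bessel_on_span (u : nat -> X) (B : R) : Prop :=
  0 <= B /\ forall f, in_cspan u f ->
    exists s, Ser (fun j => Cmod2 (hinner f (u j))) s /\ s <= B * hnorm f ^ 2.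

Lemma frame_seq_bessel u A B : frame_seq u A B -> bessel_on_span u B.
Proof.
  intros [HA [HB H]]. split; [lra |]. intros f Hf. destruct (H f Hf) as [s [Hs [_ Hs2]]].
  exists s; split; auto. apply infinite_sum_Ser; auto.
Qed.

Variables (u : nat -> X) (B : R) (Hbes : bessel_on_span u B).

Lemma synth_fin_bound a n :
  hnorm (hpsum (fun k => hscal (a k) (u k)) n) ^ 2 <= B * rsum (fun k => Cmod2 (a k)) n.
Proof.
  destruct Hbes as [HB Hin]. set (s := hpsum (fun k => hscal (a k) (u k)) n).
  destruct (Hin s) as [sig [Hsig Hle]]. { apply in_span_cspan; exists n, a; auto. }
  set (Sa := rsum (fun k => Cmod2 (a k)) n). assert (HSa : 0 <= Sa) by (apply rsum_nonneg; intros; apply Cmod2_nonneg).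
  assert (Hexpand : hnorm s ^ 2 <= rsum (fun k => sqrt (Cmod2 (a k)) * sqrt (Cmod2 (hinner s (u k)))) n).
  { rewrite hnorm_sq. unfold s at 1. rewrite re_inner_hpsum. apply rsum_le. intros k.
    rewrite inner_scal_l, <- (Cmod2_conj (hinner s (u k))), <- inner_conj. apply re_mul_le. }
  assert (Hcs : rsum (fun k => sqrt (Cmod2 (a k)) * sqrt (Cmod2 (hinner s (u k)))) n
                <= sqrt Sa * (sqrt B * hnorm s)).
  { eapply Rle_trans; [apply rsum_cauchy_schwarz; intros; apply sqrt_pos |].
    rewrite (rsum_ext (fun k => sqrt (Cmod2 (a k)) * sqrt (Cmod2 (a k))) (fun k => Cmod2 (a k)))
      by (intros; apply sqrt_sqrt, Cmod2_nonneg).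
    rewrite (rsum_ext (fun k => sqrt (Cmod2 (hinner s (u k))) * sqrt (Cmod2 (hinner s (u k))))
               (fun k => Cmod2 (hinner s (u k)))) by (intros; apply sqrt_sqrt, Cmod2_nonneg).
    apply Rmult_le_compat_l; [apply sqrt_pos |]. apply sqrt_le_sqrt_mult_sq; auto; [apply hnorm_nonneg |].
    eapply Rle_trans; [| exact Hle]. apply Ser_partial_le; auto; intros; apply Cmod2_nonneg. }
  assert (Hs : hnorm s <= sqrt Sa * sqrt B).
  { apply le_of_sq_le_mul; [apply hnorm_nonneg | apply Rmult_le_pos; apply sqrt_pos |].
    replace (hnorm s * hnorm s) with (hnorm s ^ 2) by ring. nra. }
  replace (B * Sa) with ((sqrt Sa * sqrt B) ^ 2) by (rewrite Rpow_mult_distr, !pow2_sqrt; auto; ring).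
  apply pow_incr; split; [apply hnorm_nonneg | exact Hs].
Qed.

(** Bessel's inequality for every vector, from the bound on finite syntheses. *)
Lemma bessel_partial h n : rsum (fun k => Cmod2 (hinner h (u k))) n <= B * hnorm h ^ 2.
Proof.
  pose proof (synth_fin_bound (fun k => hinner h (u k)) n) as Hb.
  set (s := hpsum (fun k => hscal (hinner h (u k)) (u k)) n) in *.
  set (sg := rsum (fun k => Cmod2 (hinner h (u k))) n) in *.
  assert (Hsg : 0 <= sg) by (apply rsum_nonneg; intros; apply Cmod2_nonneg).
  destruct Hbes as [HB _]. pose proof (hnorm_nonneg h).
  assert (E : re (hinner s h) = sg).
  { unfold s; rewrite re_inner_hpsum. apply rsum_ext. intros k.
    rewrite inner_scal_l, (inner_conj h (u k)). apply re_mul_conj_self. }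
  assert (Hs : hnorm s <= sqrt B * sqrt sg).
  { rewrite <- sqrt_mult, <- (sqrt_pow2 (hnorm s)) by (auto; apply hnorm_nonneg). apply sqrt_le_1_alt, Hb. }
  assert (Hroot : sqrt sg <= sqrt B * hnorm h).
  { apply le_of_sq_le_mul; [apply sqrt_pos | apply Rmult_le_pos; auto; apply sqrt_pos |].
    rewrite sqrt_sqrt by auto. rewrite <- E at 1. eapply Rle_trans; [apply cauchy_schwarz_re |].
    apply Rle_trans with (sqrt B * sqrt sg * hnorm h); [apply Rmult_le_compat_r; auto | right; ring]. }
  rewrite <- (pow2_sqrt sg), <- (pow2_sqrt B), <- Rpow_mult_distr by auto.
  apply pow_incr; split; [apply sqrt_pos | exact Hroot].
Qed.

Lemma analysis_l2 h : is_l2 (analysis u h) /\ n2 (analysis u h) <= B * hnorm h ^ 2.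
Proof.
  destruct (Ser_bounded (fun k => Cmod2 (analysis u h k)) (B * hnorm h ^ 2)) as [l [Hl Hle]].
  - intros; apply Cmod2_nonneg.
  - intros n; apply bessel_partial.
  - split; [apply is_l2_Ser; exists l; auto |]. unfold n2; rewrite (series_sum_eq _ _ Hl); auto.
Qed.

Lemma synth_partial_cauchy c : is_l2 c -> forall eps, 0 < eps -> exists N, forall n m,
  (N <= n)%nat -> (n <= m)%nat ->
  hnorm (hsub (hpsum (fun k => hscal (c k) (u k)) m) (hpsum (fun k => hscal (c k) (u k)) n)) < eps.
Proof.
  intros Hl2 e He. destruct Hbes as [HB _]. pose proof (l2_Ser _ Hl2) as Hser.
  destruct (CV_Cauchy _ (exist _ _ Hser) (e * e / (B + 1))) as [N HN]. { apply Rdiv_lt_0_compat; nra. }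
  exists N. intros n m Hn Hnm. rewrite hpsum_tail by auto.
  pose proof (synth_fin_bound (coef_from c n) m) as Hb. rewrite rsum_coef_from in Hb by auto.
  specialize (HN m n ltac:(lia) Hn). unfold Rdist in HN.
  pose proof (rsum_mono (fun k => Cmod2 (c k)) n m (fun k => Cmod2_nonneg (c k)) Hnm).
  rewrite Rabs_right in HN by lra.
  set (nn := hnorm (hpsum (fun k => hscal (coef_from c n k) (u k)) m)) in *.
  assert (Hnn : 0 <= nn) by apply hnorm_nonneg.
  enough (nn ^ 2 < e * e) by nra.
  eapply Rle_lt_trans; [apply Hb |].
  apply Rle_lt_trans with (B * (e * e / (B + 1))); [apply Rmult_le_compat_l; lra |].
  apply Rlt_le_trans with ((B + 1) * (e * e / (B + 1))); [apply Rmult_lt_compat_r; [apply Rdiv_lt_0_compat; nra | lra] |].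
  right; field; lra.
Qed.

Variable Hcomp : @complete X.

Lemma synth_has_sum c : is_l2 c -> has_sum (fun k => hscal (c k) (u k)) (synth u c).
Proof.
  intros Hl2. apply (epsilon_spec (inhabits hz) (fun x => has_sum (fun k => hscal (c k) (u k)) x)).
  apply Hcomp. intros e He. destruct (synth_partial_cauchy c Hl2 e He) as [N HN].
  exists N. intros n m Hn Hm. destruct (Nat.le_ge_cases n m).
  - rewrite hnorm_sub_sym; auto.
  - auto.
Qed.

Lemma synth_bound c : is_l2 c -> hnorm (synth u c) ^ 2 <= B * n2 c.
Proof.
  intros Hl2. pose proof (has_sum_norm _ _ (synth_has_sum c Hl2)) as Hs.
  pose proof (l2_Ser _ Hl2) as Hser. destruct Hbes as [HB _].
  assert (Hb : forall n, hnorm (hpsum (fun k => hscal (c k) (u k)) n) <= sqrt (B * n2 c)).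
  { intros n. rewrite <- (sqrt_pow2 (hnorm _)) by apply hnorm_nonneg. apply sqrt_le_1_alt.
    eapply Rle_trans; [apply synth_fin_bound |].
    apply Rmult_le_compat_l; auto. apply Ser_partial_le; auto. intros; apply Cmod2_nonneg. }
  pose proof (Un_cv_le_const _ _ _ Hb Hs). pose proof (n2_nonneg c Hl2).
  rewrite <- (pow2_sqrt (B * n2 c)) by (apply Rmult_le_pos; auto).
  apply pow_incr; split; auto; apply hnorm_nonneg.
Qed.

Lemma synth_cspan c : is_l2 c -> in_cspan u (synth u c).
Proof. intros; eapply has_sum_cspan; apply synth_has_sum; auto. Qed.

Lemma synth_lin a c d : is_l2 c -> is_l2 d -> synth u (lin a c d) = hadd (hscal a (synth u c)) (synth u d).
Proof.
  intros Hc Hd. eapply has_sum_unique; [apply synth_has_sum, l2_lin; auto |].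
  eapply has_sum_ext; [| apply has_sum_lin; apply synth_has_sum; eauto].
  intros k. unfold lin. rewrite hscal_distr_s, hscal_assoc; auto.
Qed.

Lemma synth_adjoint (z : nat -> Cx) h : is_l2 z -> l2inner z (analysis u h) = hinner (synth u z) h.
Proof.
  intros Hz. pose proof (synth_has_sum z Hz) as Hs. destruct (analysis_l2 h) as [Ha _].
  apply Cx_eq; eapply UL_sequence.
  - apply (l2inner_re_Ser _ _ Hz Ha).
  - eapply Un_cv_ext; [| apply (has_sum_inner_re _ _ h Hs)]. intros n. simpl. rewrite re_inner_hpsum.
    apply rsum_ext. intros k. rewrite inner_scal_l. unfold analysis. rewrite (inner_conj h (u k)). auto.
  - apply (l2inner_im_Ser _ _ Hz Ha).
  - eapply Un_cv_ext; [| apply (has_sum_inner_im _ _ h Hs)]. intros n. simpl. rewrite im_inner_hpsum.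
    apply rsum_ext. intros k. rewrite inner_scal_l. unfold analysis. rewrite (inner_conj h (u k)). auto.
Qed.

End BesselSequences.

Lemma analysis_lin {X : HSpace} (g : nat -> X) a (w1 w2 : X) :
  analysis g (hadd (hscal a w1) w2) = lin a (analysis g w1) (analysis g w2).
Proof. apply functional_extensionality; intros k. unfold analysis, lin. rewrite inner_add_l, inner_scal_l; auto. Qed.

Section ProjectionFormula.
Context {X : HSpace}.
Variables (u : nat -> X) (B : R) (Hbes : bessel_on_span u B) (Hcomp : @complete X).

Lemma gram_l2 z : is_l2 (gram u z).
Proof. apply (analysis_l2 u B Hbes). Qed.

Lemma orth_gram_range_orth_gens h :
  (forall z, is_l2 z -> l2inner (analysis u h) (gram u z) = Defs.C0) ->
  forall j, hinner h (u j) = Defs.C0.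
Proof.
  intros Horth. set (e := analysis u h). destruct (analysis_l2 u B Hbes h) as [He _]. fold e in He.
  assert (HUe : synth u e = hz).
  { pose proof (Horth e He) as H0. unfold gram in H0. rewrite (synth_adjoint u B Hbes Hcomp) in H0 by auto.
    fold e in H0. apply hnorm_sq_zero. rewrite H0; auto. }
  assert (Hee : n2 e = 0).
  { rewrite <- l2inner_self_re. unfold e at 2. rewrite (synth_adjoint u B Hbes Hcomp) by auto.
    rewrite HUe, inner_0_l; auto. }
  intros j; apply (n2_zero e He Hee j).
Qed.

Variables (P : l2op) (HP : is_MP_pinv (gram u) P).

Lemma pinv_orth_proj f : is_orth_proj u f (synth u (P (analysis u f))).
Proof.
  destruct HP as [[HPl2 _] [MP2 [_ [MP4 _]]]].
  set (x := analysis u f). destruct (analysis_l2 u B Hbes f) as [Hx _]. fold x in Hx.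
  set (y := P x). assert (Hy : is_l2 y) by (apply HPl2; auto).
  set (v := synth u y). set (h := hsub f v).
  assert (Hresidual : forall j, analysis u h j = lin Cm1 (gram u y) x j).
  { intros j. unfold h, analysis, gram, lin, x. rewrite inner_sub_l. fold v. unfold analysis. cx. }
  assert (Hj : forall j, hinner h (u j) = Defs.C0).
  { apply orth_gram_range_orth_gens. intros z Hz.
    rewrite (l2inner_ext _ (lin Cm1 (gram u y) x) (gram u z) (gram u z)) by auto.
    rewrite l2inner_lin_l by (auto; apply gram_l2). unfold y. rewrite MP4 by (auto; apply gram_l2).
    rewrite (l2inner_ext x x (gram u (P (gram u z))) (gram u z)) by (auto; apply MP2, Hz).
    unfold Cm1; cx. }
  split; [apply synth_cspan with B; auto | intros w Hw; apply orth_cspan with u; auto].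
Qed.

Lemma sqrt_pinv_norm T f : is_pos_sqrt P T ->
  l2norm (T (analysis u f)) = hnorm (synth u (P (analysis u f))).
Proof.
  intros [[HTl2 _] [Tsa [_ Tsq]]]. destruct HP as [[HPl2 _] _].
  set (x := analysis u f). destruct (analysis_l2 u B Hbes f) as [Hx _]. fold x in Hx.
  set (v := synth u (P x)). destruct (pinv_orth_proj f) as [Hv Horth]. fold x v in Hv, Horth.
  assert (Hvv : re (hinner v f) = re (hinner v v)).
  { pose proof (f_equal re (inner_sub_r f v v)) as E.
    rewrite inner_conj, (Horth v Hv) in E. simpl in E. lra. }
  unfold l2norm, hnorm. fold (n2 (T x)). rewrite <- l2inner_self_re, Tsa by auto.
  rewrite (l2inner_ext x x (T (T x)) (P x)) by (auto; apply Tsq, Hx).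
  rewrite (l2inner_conj (P x) x) by auto. change (re (Cconj ?z)) with (re z).
  unfold x at 2. rewrite (synth_adjoint u B Hbes Hcomp) by auto. fold v. rewrite Hvv; auto.
Qed.

End ProjectionFormula.

Section OrthogonalProjection.
Context {X : HSpace}.

Lemma orth_proj_norm_le (u : nat -> X) f v : is_orth_proj u f v -> hnorm v <= hnorm f.
Proof.
  intros [Hv Ho]. unfold hnorm. apply sqrt_le_1_alt.
  replace (hinner f f) with (hinner (hadd v (hsub f v)) (hadd v (hsub f v))) by (rewrite hadd_hsub; auto).
  rewrite normsq_add, (re_inner_sym (hsub f v) v), (Ho v Hv). pose proof (inner_pos (hsub f v)). simpl. lra.
Qed.

Lemma cos_angle_proj_lower (g u : nat -> X) cphi f v : cos_angle g u cphi ->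
  in_cspan g f -> is_orth_proj u f v -> cphi * hnorm f <= hnorm v.
Proof.
  intros [Hlb _] Hf [Hv Ho]. pose proof (hnorm_nonneg f) as Hf0.
  destruct (Req_dec (hnorm f) 0) as [E | E]; [rewrite E, Rmult_0_r; apply hnorm_nonneg |].
  set (t := / hnorm f). assert (Ht : 0 < t) by (unfold t; apply Rinv_0_lt_compat; lra).
  assert (H1 : cphi <= hnorm (hscal (Creal t) v)).
  { apply Hlb. exists (hscal (Creal t) f), (hscal (Creal t) v). repeat split.
    - apply in_cspan_scal; auto.
    - rewrite hnorm_Creal, Rabs_right by lra. unfold t; field; lra.
    - apply in_cspan_scal; auto.
    - intros y Hy. rewrite hscal_sub, inner_scal_l, (Ho y Hy). cx. }
  rewrite hnorm_Creal, Rabs_right in H1 by lra. unfold t in H1.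
  apply Rmult_le_compat_r with (r := hnorm f) in H1; [| lra].
  replace (/ hnorm f * hnorm v * hnorm f) with (hnorm v) in H1 by (field; lra). lra.
Qed.

End OrthogonalProjection.

Section FrameOperator.
Context {X : HSpace}.
Variables (g : nat -> X) (C D : R) (Hcomp : @complete X) (Hg : frame_seq g C D).

Definition frame_op (w : X) : X := synth g (analysis g w).

Let Hbes : bessel_on_span g D := frame_seq_bessel g C D Hg.
Let HC : 0 < C := proj1 Hg.
Let HD : 0 < D := proj1 (proj2 Hg).

Lemma analysis_g_l2 w : is_l2 (analysis g w).
Proof. apply (analysis_l2 g D Hbes w). Qed.

Lemma frame_op_lin a w1 w2 : frame_op (hadd (hscal a w1) w2) = hadd (hscal a (frame_op w1)) (frame_op w2).
Proof. unfold frame_op. rewrite analysis_lin. apply (synth_lin g D Hbes Hcomp); apply analysis_g_l2. Qed.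

Lemma frame_op_cspan w : in_cspan g (frame_op w).
Proof. apply (synth_cspan g D Hbes Hcomp), analysis_g_l2. Qed.

Lemma frame_op_z : frame_op hz = hz.
Proof.
  pose proof (frame_op_lin Defs.C1 hz hz) as E. rewrite !hscal_1, hadd_0 in E.
  apply (hadd_cancel (frame_op hz)). rewrite hadd_0. symmetry; exact E.
Qed.

Lemma frame_op_sub w1 w2 : frame_op (hsub w1 w2) = hsub (frame_op w1) (frame_op w2).
Proof. rewrite !hsub_scal, hadd_comm, frame_op_lin, hadd_comm; auto. Qed.

Lemma frame_op_form w : re (hinner (frame_op w) w) = n2 (analysis g w).
Proof. unfold frame_op. rewrite <- (synth_adjoint g D Hbes Hcomp) by apply analysis_g_l2. apply l2inner_self_re. Qed.

Lemma analysis_lower w : in_cspan g w -> C * hnorm w ^ 2 <= n2 (analysis g w).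
Proof.
  intros Hw. pose proof Hg as [_ [_ H]]. destruct (H w Hw) as [s [Hs [Hle _]]].
  unfold n2, analysis. rewrite (series_sum_eq _ s); auto. apply infinite_sum_Ser; auto.
Qed.

Lemma frame_op_norm w : hnorm (frame_op w) <= D * hnorm w.
Proof.
  pose proof (synth_bound g D Hbes Hcomp _ (analysis_g_l2 w)) as H1.
  pose proof (proj2 (analysis_l2 g D Hbes w)) as H2. fold (frame_op w) in H1.
  pose proof (hnorm_nonneg w). pose proof (hnorm_nonneg (frame_op w)).
  apply Rsqr_incr_0_var; [unfold Rsqr; nra | nra].
Qed.

Definition contraction_sq : R := Rmax (1 - C / D) 0.
Definition rho : R := sqrt contraction_sq.

Lemma rho_bounds : 0 <= rho < 1.
Proof.
  assert (Hq : 0 <= contraction_sq < 1).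
  { unfold contraction_sq. split; [apply Rmax_r |].
    apply Rmax_lub_lt; [| lra]. assert (0 < C / D) by (apply Rdiv_lt_0_compat; lra). lra. }
  unfold rho. split; [apply sqrt_pos |]. rewrite <- sqrt_1. apply sqrt_lt_1_alt; lra.
Qed.

Lemma richardson_step_sq w : in_cspan g w ->
  hnorm (hsub w (hscal (Creal (/ D)) (frame_op w))) ^ 2 <= contraction_sq * hnorm w ^ 2.
Proof.
  intros Hw. rewrite hnorm_sq, normsq_sub, re_inner_Creal_r, normsq_scal, Cmod2_Creal.
  rewrite (re_inner_sym (frame_op w) w), frame_op_form.
  pose proof (synth_bound g D Hbes Hcomp _ (analysis_g_l2 w)) as H1. fold (frame_op w) in H1.
  pose proof (analysis_lower w Hw) as H2. rewrite hnorm_sq in H1, H2 |- *.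
  set (a := n2 (analysis g w)) in *. set (nw := re (hinner w w)) in *.
  set (ns := re (hinner (frame_op w) (frame_op w))) in *.
  assert (Hns : / D * / D * ns <= a / D).
  { apply Rle_trans with (/ D * / D * (D * a)); [| right; field; lra].
    apply Rmult_le_compat_l; auto. apply Rlt_le, Rmult_lt_0_compat; apply Rinv_0_lt_compat; lra. }
  assert (Ha : C / D * nw <= a / D).
  { unfold Rdiv. rewrite Rmult_assoc, (Rmult_comm (/ D)), <- Rmult_assoc.
    apply Rmult_le_compat_r; [apply Rlt_le, Rinv_0_lt_compat |]; lra. }
  apply Rle_trans with ((1 - C / D) * nw); [unfold Rdiv in *; nra |].
  apply Rmult_le_compat_r; [apply inner_pos | apply Rmax_l].
Qed.

Lemma richardson_step w : in_cspan g w ->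
  hnorm (hsub w (hscal (Creal (/ D)) (frame_op w))) <= rho * hnorm w.
Proof.
  intros Hw. pose proof (richardson_step_sq w Hw) as H. pose proof rho_bounds.
  apply Rsqr_incr_0_var; [| apply Rmult_le_pos; [lra | apply hnorm_nonneg]].
  rewrite !Rsqr_pow2, Rpow_mult_distr. unfold rho. rewrite pow2_sqrt; auto.
  unfold contraction_sq; apply Rmax_r.
Qed.

(** Richardson iteration for [S w = f]: pairs (approximant [w_n], residual [f - S w_n]). *)
Fixpoint richardson (f : X) (n : nat) : X * X :=
  match n with
  | O => (hz, f)
  | S m => let p := richardson f m in
      (hadd (fst p) (hscal (Creal (/ D)) (snd p)),
       hsub (snd p) (hscal (Creal (/ D)) (frame_op (snd p))))
  end.

Lemma richardson_invariant f : in_cspan g f -> forall n,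
  snd (richardson f n) = hsub f (frame_op (fst (richardson f n))) /\
  in_cspan g (fst (richardson f n)) /\ in_cspan g (snd (richardson f n)).
Proof.
  intros Hf n. induction n as [| n [E [Hw He]]]; simpl.
  - rewrite frame_op_z, hsub_0. repeat split; auto. apply in_cspan_z.
  - repeat split.
    + rewrite hadd_comm, frame_op_lin, hadd_comm, hsub_hadd, <- E; auto.
    + apply in_cspan_add; auto. apply in_cspan_scal; auto.
    + apply in_cspan_sub; auto. apply in_cspan_scal, frame_op_cspan.
Qed.

Lemma richardson_residual f : in_cspan g f -> forall n, hnorm (snd (richardson f n)) <= rho ^ n * hnorm f.
Proof.
  intros Hf n. pose proof rho_bounds. induction n; simpl; [lra |].
  destruct (richardson_invariant f Hf n) as [_ [_ He]].
  eapply Rle_trans; [apply richardson_step; auto |].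
  rewrite Rmult_assoc. apply Rmult_le_compat_l; lra.
Qed.

Lemma richardson_increments f : in_cspan g f -> forall n m, (n <= m)%nat ->
  hnorm (hsub (fst (richardson f m)) (fst (richardson f n))) <= / D * hnorm f * (rho ^ n - rho ^ m) / (1 - rho).
Proof.
  intros Hf n m Hnm. pose proof rho_bounds. pose proof (hnorm_nonneg f).
  assert (Hl : 0 < / D) by (apply Rinv_0_lt_compat; lra).
  induction Hnm; [rewrite hsub_diag, hnorm_z; right; field; lra |].
  simpl. rewrite hsub_hadd_l. eapply Rle_trans; [apply hnorm_triang |].
  rewrite hnorm_Creal, Rabs_right by lra. pose proof (richardson_residual f Hf m).
  apply Rle_trans with (/ D * hnorm f * (rho ^ n - rho ^ m) / (1 - rho) + / D * (rho ^ m * hnorm f)).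
  { apply Rplus_le_compat; auto. apply Rmult_le_compat_l; lra. }
  right; field; lra.
Qed.

Lemma rho_pow_small eps : 0 < eps -> exists N, forall n, (N <= n)%nat -> rho ^ n < eps.
Proof.
  intros He. pose proof rho_bounds.
  destruct (pow_lt_1_zero rho ltac:(rewrite Rabs_right; lra) eps He) as [N HN].
  exists N; intros n Hn. specialize (HN n Hn). rewrite Rabs_right in HN; auto.
  apply Rle_ge, pow_le; lra.
Qed.

Lemma richardson_limit f : in_cspan g f -> exists w, in_cspan g w /\
  forall eps, 0 < eps -> exists N, forall n, (N <= n)%nat -> hnorm (hsub (fst (richardson f n)) w) < eps.
Proof.
  intros Hf. pose proof rho_bounds. pose proof (hnorm_nonneg f).
  set (K := / D * (hnorm f + 1) / (1 - rho)).
  assert (HK : 0 < K) by (unfold K; apply Rdiv_lt_0_compat; [apply Rmult_lt_0_compat; [apply Rinv_0_lt_compat |] |]; lra).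
  assert (Hbd : forall n m, (n <= m)%nat -> hnorm (hsub (fst (richardson f m)) (fst (richardson f n))) <= K * rho ^ n).
  { intros n m Hnm. eapply Rle_trans; [apply richardson_increments; auto |]. unfold K, Rdiv.
    pose proof (pow_le rho m ltac:(lra)). pose proof (pow_le rho n ltac:(lra)).
    assert (0 < / D) by (apply Rinv_0_lt_compat; lra). assert (0 < / (1 - rho)) by (apply Rinv_0_lt_compat; lra).
    apply Rle_trans with (/ D * / (1 - rho) * (hnorm f * (rho ^ n - rho ^ m))); [right; ring |].
    apply Rle_trans with (/ D * / (1 - rho) * ((hnorm f + 1) * rho ^ n)); [| right; ring].
    apply Rmult_le_compat_l; [apply Rmult_le_pos; lra | nra]. }
  destruct (Hcomp (fun n => fst (richardson f n))) as [w Hw].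
  { intros e He. destruct (rho_pow_small (e / K)) as [N HN]. { apply Rdiv_lt_0_compat; lra. }
    assert (Hsmall : forall n m, (N <= n)%nat -> (n <= m)%nat ->
              hnorm (hsub (fst (richardson f m)) (fst (richardson f n))) < e).
    { intros a b Ha Hab. eapply Rle_lt_trans; [apply Hbd; auto |].
      apply Rlt_le_trans with (K * (e / K)); [apply Rmult_lt_compat_l; auto | right; field; lra]. }
    exists N. intros n m Hn Hm. destruct (Nat.le_ge_cases n m).
    - rewrite hnorm_sub_sym; auto.
    - auto. }
  exists w. split; auto.
  apply in_cspan_closed. intros e He. destruct (Hw e He) as [N HN]. exists (fst (richardson f N)). split.
  - apply (richardson_invariant f Hf N).
  - rewrite hnorm_sub_sym; apply HN; lia.
Qed.

Lemma frame_op_onto f : in_cspan g f -> exists w, in_cspan g w /\ frame_op w = f.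
Proof.
  intros Hf. destruct (richardson_limit f Hf) as [w [Hw Hlim]]. exists w. split; auto.
  pose proof rho_bounds. pose proof (hnorm_nonneg f).
  symmetry. apply hsub_eq, hnorm_zero, small_zero. intros e He.
  rewrite Rabs_right by (apply Rle_ge, hnorm_nonneg).
  destruct (Hlim (e / 2 / (D + 1))) as [N1 H1]. { apply Rdiv_lt_0_compat; lra. }
  destruct (rho_pow_small (e / 2 / (hnorm f + 1))) as [N2 H2]. { apply Rdiv_lt_0_compat; lra. }
  set (n := max N1 N2). specialize (H1 n (Nat.le_max_l _ _)). specialize (H2 n (Nat.le_max_r _ _)).
  destruct (richardson_invariant f Hf n) as [E _]. pose proof (richardson_residual f Hf n) as Hn.
  rewrite E in Hn. set (wn := fst (richardson f n)) in *.
  eapply Rle_trans; [apply (hnorm_sub_triang f (frame_op wn) (frame_op w)) |].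
  rewrite <- frame_op_sub. pose proof (frame_op_norm (hsub wn w)). pose proof (hnorm_nonneg (hsub wn w)).
  assert (rho ^ n * hnorm f <= e / 2).
  { apply Rle_trans with (e / 2 / (hnorm f + 1) * (hnorm f + 1)); [| right; field; lra].
    pose proof (pow_le rho n ltac:(lra)). apply Rmult_le_compat; lra. }
  assert (D * hnorm (hsub wn w) <= e / 2).
  { apply Rle_trans with ((D + 1) * (e / 2 / (D + 1))); [| right; field; lra].
    apply Rmult_le_compat; lra. }
  lra.
Qed.

(** Writing [G c = S w], the sequence [G^* w - c] lies in the kernel, so
    [|c|^2 <= |G^* w|^2 = <G c, w> <= |G c| |w|] while [C |w|^2 <= |G^* w|^2]. *)
Lemma synth_lower_bound c : is_l2 c ->
  (forall d, is_l2 d -> synth g d = hz -> l2inner c d = Defs.C0) ->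
  sqrt C * l2norm c <= hnorm (synth g c).
Proof.
  intros Hl Horth. set (f := synth g c).
  destruct (frame_op_onto f) as [w [Hw HSw]]; [apply (synth_cspan g D Hbes Hcomp); auto |].
  set (d0 := analysis g w). pose proof (analysis_g_l2 w) as Hd0. fold d0 in Hd0.
  set (dk := lin Cm1 c d0). assert (Hdk : is_l2 dk) by (apply l2_lin; auto).
  assert (Hker : synth g dk = hz).
  { unfold dk. rewrite (synth_lin g D Hbes Hcomp) by auto. unfold frame_op in HSw. fold d0 in HSw.
    rewrite HSw, hadd_comm, <- hopp_scal. apply hadd_opp. }
  assert (Hsplit : n2 d0 = n2 c + n2 dk).
  { rewrite <- n2_orth_sum by auto. apply n2_ext. intros k. unfold dk, lin, Cm1. cx. }
  pose proof (n2_nonneg dk Hdk). pose proof (n2_nonneg c Hl).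
  assert (Hform : n2 d0 <= hnorm f * hnorm w).
  { unfold d0. rewrite <- frame_op_form, HSw. apply cauchy_schwarz_re. }
  pose proof (analysis_lower w Hw) as Hlow. fold d0 in Hlow.
  pose proof (hnorm_nonneg f); pose proof (hnorm_nonneg w).
  assert (Hsq : C * n2 d0 <= hnorm f ^ 2).
  { set (a := n2 d0) in *. set (nf := hnorm f) in *. set (nw := hnorm w) in *.
    assert (Ha2 : C * (a * a) <= nf ^ 2 * a).
    { apply Rle_trans with (C * ((nf * nw) * (nf * nw))); [apply Rmult_le_compat_l; [lra | apply Rmult_le_compat; lra] |].
      replace (C * (nf * nw * (nf * nw))) with (nf ^ 2 * (C * nw ^ 2)) by ring.
      apply Rmult_le_compat_l; [apply pow2_ge_0 | lra]. }
    destruct (Req_dec a 0) as [Ea | Ea]; [rewrite Ea; pose proof (pow2_ge_0 nf); lra |].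
    apply Rmult_le_reg_r with a; [lra | nra]. }
  unfold l2norm. fold (n2 c). rewrite <- sqrt_mult, <- (sqrt_pow2 (hnorm f)) by lra.
  apply sqrt_le_1_alt. nra.
Qed.

End FrameOperator.

Lemma bounded_op_zero (M : l2op) : is_bounded_op M -> seq_eq (M zero_seq) zero_seq.
Proof.
  intros [_ [Hlin _]] n. destruct zero_seq_l2 as [Hz _].
  specialize (Hlin Defs.C1 zero_seq zero_seq Hz Hz n).
  replace (fun n => Cadd (Cmul Defs.C1 (zero_seq n)) (zero_seq n)) with zero_seq in Hlin
    by (apply functional_extensionality; intros; unfold zero_seq; cx).
  revert Hlin. unfold zero_seq. destruct (M (fun _ => Defs.C0) n) as [p q].
  intros E. pose proof (f_equal re E) as Ere. pose proof (f_equal im E) as Eim. simpl in *.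
  apply Cx_eq; simpl; lra.
Qed.

Lemma analysis_hz {X : HSpace} (u : nat -> X) : analysis u hz = zero_seq.
Proof. apply functional_extensionality; intros; unfold analysis; rewrite inner_0_l; auto. Qed.

Lemma synth_norm_le {X : HSpace} (Hcomp : @complete X) (g : nat -> X) D c :
  bessel_on_span g D -> is_l2 c -> hnorm (synth g c) <= sqrt D * l2norm c.
Proof.
  intros Hbes Hl. pose proof (synth_bound g D Hbes Hcomp c Hl). destruct Hbes as [HD _].
  pose proof (n2_nonneg c Hl). pose proof (hnorm_nonneg (synth g c)).
  unfold l2norm. fold (n2 c). rewrite <- sqrt_mult, <- (sqrt_pow2 (hnorm (synth g c))) by auto.
  apply sqrt_le_1_alt; auto.
Qed.

Lemma sqrt_pinv_analysis_bounds {X : HSpace} (Hcomp : @complete X) (g u : nat -> X) A B cphi T f :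
  frame_seq u A B -> cos_angle g u cphi -> is_sqrt_pinv (gram u) T -> in_cspan g f ->
  cphi * hnorm f <= l2norm (T (analysis u f)) <= hnorm f.
Proof.
  intros Hu Hcos [P [HP HT]] Hf. pose proof (frame_seq_bessel u A B Hu) as Hbes.
  rewrite (sqrt_pinv_norm u B Hbes Hcomp P HP T f HT).
  pose proof (pinv_orth_proj u B Hbes Hcomp P HP f) as Hproj. split.
  - apply (cos_angle_proj_lower g u cphi f _ Hcos Hf Hproj).
  - apply (orth_proj_norm_le u f _ Hproj).
Qed.

Theorem lemma4p9 (X : HSpace) (Hcomp : @complete X) (Hsep : @separable X)
  (u g : nat -> X) (A B C D : R)
  (Hu : frame_seq u A B) (Hg : frame_seq g C D)
  (cphi : R) (Hcos : cos_angle g u cphi) (Hpos : 0 < cphi)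
  (T : l2op) (HT : is_sqrt_pinv (gram u) T) :
  (forall c, is_l2 c ->
     (synth g c = hz <-> seq_eq (T (analysis u (synth g c))) zero_seq)) /\
  (forall c, is_l2 c ->
     (forall d, is_l2 d -> synth g d = hz -> l2inner c d = C0) ->
     sqrt C * cphi * l2norm c <= l2norm (T (analysis u (synth g c))) /\
     l2norm (T (analysis u (synth g c))) <= sqrt D * l2norm c).
Proof.
  pose proof (frame_seq_bessel g C D Hg) as Hbes_g.
  assert (Hbounds : forall c, is_l2 c ->
            cphi * hnorm (synth g c) <= l2norm (T (analysis u (synth g c))) <= hnorm (synth g c)).
  { intros c Hl. apply (sqrt_pinv_analysis_bounds Hcomp g u A B); auto.
    apply (synth_cspan g D Hbes_g Hcomp c Hl). }
  split; intros c Hl; [split |].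
  - intros ->. rewrite analysis_hz. destruct HT as [P [_ [HTb _]]]. apply bounded_op_zero, HTb.
  - intros HTz. destruct (Hbounds c Hl) as [Hlow _].
    change (l2norm ?d) with (sqrt (n2 d)) in Hlow.
    rewrite (n2_ext _ zero_seq HTz), (proj2 zero_seq_l2), sqrt_0 in Hlow.
    apply hnorm_zero. pose proof (hnorm_nonneg (synth g c)). nra.
  - intros Horth. destruct (Hbounds c Hl) as [Hlow Hup].
    pose proof (synth_lower_bound g C D Hcomp Hg c Hl Horth) as Hsynth. split.
    + rewrite (Rmult_comm (sqrt C) cphi), Rmult_assoc.
      eapply Rle_trans; [apply Rmult_le_compat_l; [lra | exact Hsynth] | exact Hlow].
    + eapply Rle_trans; [exact Hup | apply (synth_norm_le Hcomp g D c Hbes_g Hl)].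
Qed.
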